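(* Let $q\in(0,1)$ and let $W\in\mathbb{R}^{I\times I}$ be a nonnegative matrix with zero diagonal, $\mathbf{1}^*W\mathbf{1}=1$ and $W\mathbf{1}=W^*\mathbf{1}$. Consider the Asynchronous Asymmetric Gossip Algorithm: at each time $t$, independently of the past, an ordered pair $(i,j)$ is sampled with probability $W_{ij}$, then $x_i(t+1)=(1-q)x_i(t)+qx_j(t)$ and $x_k(t+1)=x_k(t)$ for $k\ne i$. Then for every $t\ge0$, $$\mathbb{E}[(\bar x(t)-\bar x(0))^2]\le\frac{q}{N(1-q)+q}V(x(0)).$$
   Context: $I$ is a finite set of $N$ nodes, $x(0)\in\mathbb{R}^I$ deterministic. $\mathbf{1}$ is the all-ones vector, $W^*$ the transpose. For $y\in\mathbb{R}^I$, $\bar y=\frac1N\sum_i y_i$ and $V(y)=\frac1N\sum_i(y_i-\bar y)^2$. *)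

From HB Require Import structures.
From mathcomp Require Import all_boot all_order all_algebra.
Set Implicit Arguments. Unset Strict Implicit. Unset Printing Implicit Defensive.
Import Order.TTheory GRing.Theory Num.Theory.
Local Open Scope ring_scope.

Definition avg (R : realFieldType) (I : finType) (y : I -> R) : R :=
  (\sum_(i : I) y i) / #|I|%:R.

Definition var (R : realFieldType) (I : finType) (y : I -> R) : R :=
  (\sum_(i : I) (y i - avg y) ^+ 2) / #|I|%:R.

Definition gossip_step (R : realFieldType) (I : finType) (q : R) (i j : I)
  (x : I -> R) : I -> R :=
  fun k => if k == i then (1 - q) * x i + q * x j else x k.

(* gossip_expect W q t f x0 = E[ f (x(t)) ] when x(0) = x0 and at each step an
   ordered pair (i,j) is drawn independently with probability W i j. *)
Fixpoint gossip_expect (R : realFieldType) (I : finType) (W : I -> I -> R)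
  (q : R) (t : nat) (f : (I -> R) -> R) (x : I -> R) : R :=
  match t with
  | 0%N => f x
  | t'.+1 => \sum_(i : I) \sum_(j : I) W i j * gossip_expect W q t' f (gossip_step q i j x)
  end.

From HB Require Import structures.
From mathcomp Require Import all_boot all_order all_algebra.
From mathcomp Require Import ring lra.
Import Order.TTheory GRing.Theory Num.Theory.
Set Implicit Arguments. Unset Strict Implicit.
Local Open Scope ring_scope.

(* With a := q / (N (1 - q) + q) and c := avg x(0), consider
   the Lyapunov function  Phi(y) = (avg y - c)^2 + a V(y).
   1. Since gossip_step only changes coordinate i, avg and the mean of squares
      (hence V, by V = mean of squares - avg^2) change by explicit amounts; for
      this particular value of a the increment Phi(step i j x) - Phi(x) is a
      potential difference g(x_j) - g(x_i), with g a quadratic depending on x.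
   2. For a balanced weight matrix (W 1 = W^* 1) every such potential
      difference averages to zero, so with total mass 1 the expectation of
      Phi is preserved by one step: Phi is harmonic for the chain.
   3. Harmonic functions are invariant under gossip_expect, and gossip_expect
      is monotone in the observed function since W >= 0.
   Hence E[(avg x(t) - c)^2] <= E[Phi(x(t))] = Phi(x(0)) = a V(x(0)).  *)

Lemma balanced_potential_sum (R : comNzRingType) (I : finType)
    (W : I -> I -> R) (g : I -> R) :
  (forall i, \sum_j W i j = \sum_j W j i) ->
  \sum_i \sum_j W i j * (g j - g i) = 0.
Proof.
move=> balanced.
have -> : \sum_i \sum_j W i j * (g j - g i) =
    \sum_i \sum_j W i j * g j - \sum_i g i * \sum_j W i j.
  rewrite -sumrB; apply: eq_bigr => i _.
  by rewrite mulr_sumr -sumrB; apply: eq_bigr => j _; ring.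
under [X in _ - X]eq_bigr => i _ do rewrite balanced mulr_sumr.
rewrite [X in _ - X]exchange_big /=; apply/eqP; rewrite subr_eq0; apply/eqP.
by apply: eq_bigr => i _; apply: eq_bigr => j _; rewrite mulrC.
Qed.

Lemma sum_update (V : zmodType) (I : finType) (T : Type) (i : I)
    (y z : I -> T) (F : T -> V) :
  (forall k, k != i -> z k = y k) ->
  \sum_k F (z k) = \sum_k F (y k) + (F (z i) - F (y i)).
Proof.
move=> same_off_i; rewrite (bigD1 i) //= [in RHS](bigD1 i) //=.
rewrite (eq_bigr (fun k => F (y k))); last by move=> k /same_off_i ->.
by rewrite [RHS]addrC addrA subrK.
Qed.

Lemma card_gt0_of_sum_neq0 (V : zmodType) (I : finType) (F : I -> V) :
  \sum_i F i != 0 -> (0 < #|I|)%N.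
Proof.
apply: contraR; rewrite -leqNgt leqn0 => /eqP/card0_eq empty.
by rewrite big_pred0.
Qed.

Section GossipChain.
Variables (R : realFieldType) (I : finType) (W : I -> I -> R) (q : R).

Lemma gossip_expect_monotone (f g : (I -> R) -> R) :
  (forall i j, 0 <= W i j) -> (forall x, f x <= g x) ->
  forall t x, gossip_expect W q t f x <= gossip_expect W q t g x.
Proof.
move=> W_ge0 le_fg; elim=> [|t IH] x //=.
apply: ler_sum => i _; apply: ler_sum => j _.
exact: ler_wpM2l.
Qed.

Lemma gossip_expect_harmonic (g : (I -> R) -> R) :
  (forall x, \sum_i \sum_j W i j * g (gossip_step q i j x) = g x) ->
  forall t x, gossip_expect W q t g x = g x.
Proof.
move=> harmonic; elim=> [|t IH] x //=.
rewrite -[RHS]harmonic; apply: eq_bigr => i _; apply: eq_bigr => j _.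
by rewrite IH.
Qed.

Lemma var_moments (y : I -> R) :
  #|I|%:R != 0 :> R -> var y = (\sum_k y k ^+ 2) / #|I|%:R - avg y ^+ 2.
Proof.
move=> n_neq0; rewrite /var.
have -> : \sum_i (y i - avg y) ^+ 2 =
    \sum_i y i ^+ 2 - 2 * avg y * \sum_i y i + (avg y ^+ 2) *+ #|I|.
  rewrite -sumr_const mulr_sumr -sumrB -big_split /=.
  by apply: eq_bigr => i _; ring.
by rewrite /avg -mulr_natr; field.
Qed.

Lemma var_ge0 (y : I -> R) : 0 <= var y.
Proof.
apply: divr_ge0; last exact: ler0n.
by apply: sumr_ge0 => i _; exact: sqr_ge0.
Qed.

Definition lyapunov (c : R) (y : I -> R) : R :=
  (avg y - c) ^+ 2 + q / (#|I|%:R * (1 - q) + q) * var y.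

(* Step 1: the increment of Phi along one gossip update is a potential
   difference.  Here the choice of a is what cancels the cross term
   x_i (x_j - x_i) coming from the square of the update. *)
Lemma lyapunov_step_potential (c : R) (x : I -> R) :
  #|I|%:R != 0 :> R -> #|I|%:R * (1 - q) + q != 0 ->
  exists g : R -> R, forall i j,
    lyapunov c (gossip_step q i j x) = lyapunov c x + (g (x j) - g (x i)).
Proof.
move=> n_neq0 den_neq0.
set n := #|I|%:R : R; set a := q / (n * (1 - q) + q).
exists (fun r => 2 * q * ((avg x - c) - a * avg x) / n * r + a * q / n * r ^+ 2).
move=> i j.
have off_i k : k != i -> gossip_step q i j x k = x k.
  by move=> /negPf k_neq_i; rewrite /gossip_step k_neq_i.
have at_i : gossip_step q i j x i = (1 - q) * x i + q * x j.
  by rewrite /gossip_step eqxx.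
rewrite /lyapunov !var_moments // /avg.
rewrite (sum_update id off_i) (sum_update (fun r => r ^+ 2) off_i) at_i.
rewrite -/n /a /avg -/n.
by field; apply/andP.
Qed.

Lemma lyapunov_harmonic (c : R) (x : I -> R) :
  #|I|%:R != 0 :> R -> #|I|%:R * (1 - q) + q != 0 ->
  \sum_i \sum_j W i j = 1 ->
  (forall i, \sum_j W i j = \sum_j W j i) ->
  \sum_i \sum_j W i j * lyapunov c (gossip_step q i j x) = lyapunov c x.
Proof.
move=> n_neq0 den_neq0 mass1 balanced.
have [g step] := lyapunov_step_potential c x n_neq0 den_neq0.
under eq_bigr => i _ do under eq_bigr => j _ do rewrite step mulrDr.
rewrite (eq_bigr (fun i => \sum_j W i j * lyapunov c x +
    \sum_j W i j * (g (x j) - g (x i)))); last by move=> i _; rewrite big_split.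
rewrite big_split /= (balanced_potential_sum (fun k => g (x k)) balanced).
rewrite addr0 -[RHS]mul1r -mass1 mulr_suml.
by apply: eq_bigr => i _; rewrite mulr_suml.
Qed.

End GossipChain.

Theorem mainTheorem10 (R : realFieldType) (I : finType) (q : R)
  (W : I -> I -> R) (x0 : I -> R) :
  0 < q -> q < 1 ->
  (forall i j, 0 <= W i j) ->
  (forall i, W i i = 0) ->
  \sum_(i : I) \sum_(j : I) W i j = 1 ->
  (forall i, \sum_(j : I) W i j = \sum_(j : I) W j i) ->
  forall t : nat,
    gossip_expect W q t (fun x => (avg x - avg x0) ^+ 2) x0
      <= q / (#|I|%:R * (1 - q) + q) * var x0.
Proof.
move=> q_gt0 q_lt1 W_ge0 _ mass1 balanced t.
have n_gt0 : 0 < #|I|%:R :> R.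
  by rewrite ltr0n; apply: (card_gt0_of_sum_neq0 (F := fun i => \sum_j W i j));
     rewrite mass1 oner_neq0.
have den_gt0 : 0 < #|I|%:R * (1 - q) + q.
  by apply: ltr_wpDl => //; apply: mulr_ge0; [exact: ltW | lra].
have a_ge0 : 0 <= q / (#|I|%:R * (1 - q) + q) by apply: divr_ge0; exact: ltW.
apply: (le_trans (gossip_expect_monotone (g := lyapunov q (avg x0)) _ W_ge0 _ t x0)).
  by move=> y; rewrite /lyapunov lerDl; exact: mulr_ge0 (var_ge0 _).
rewrite gossip_expect_harmonic; last first.
  by move=> x; apply: lyapunov_harmonic; rewrite ?gt_eqF.
by rewrite /lyapunov subrr expr0n /= add0r.
Qed.
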